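(* There exists $n_0$ such that for all integers $n>n_0$: $$\langle \ell_n\alpha\rangle=3A\langle k_n\theta\rangle\quad\text{and}\quad\langle\ell_n\alpha^2\rangle=\langle k_n\theta^2\rangle-2B\langle k_n\theta\rangle.$$
   Context: Let $f(x)=Ax^3+Bx^2+Cx+D\in\mathbb{Z}[x]$ be irreducible with $A>0$, having exactly one real root $\alpha$. Put $p=3(B^2-3AC)$, $q=-2B^3+9ABC-27A^2D$, so that $27A^2f\!\left(\frac{x-B}{3A}\right)=x^3-px-q$, and put $\theta=3A\alpha+B$, the unique real root of $x^3-px-q$. Let $K=\mathbb{Q}(\theta)=\mathbb{Q}(\alpha)\subset\mathbb{R}$ with ring of integers $\mathcal{O}_K$, let $d$ be a positive integer with $\mathcal{O}_K\subseteq\frac1d\mathbb{Z}[\theta]$, and let $\lambda\in\mathcal{O}_K$ be a unit with $\lambda>1$. Define rationals $a_n,b_n,c_n$ by $a_n+b_n\theta+c_n\theta^2=\lambda^n$, and $k_n=dc_n$, $\ell_n=9A^2k_n$. For $x\in\mathbb{R}$, $\langle x\rangle=x-\lfloor x+\tfrac12\rfloor$. *)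

From HB Require Import structures.
From mathcomp Require Import all_boot all_order all_algebra.
From Stdlib Require Import Reals QArith Qreals.

Set Implicit Arguments.
Unset Strict Implicit.
Unset Printing Implicit Defensive.

Definition intR (z : int) : R :=
  match z with
  | Posz n => INR n
  | Negz n => (- INR (S n))%R
  end.

Definition peval (p : {poly int}) (x : R) : R :=
  foldr (fun c acc => (intR c + x * acc)%R) 0%R (polyseq p).

Section CubicDef.
Local Open Scope ring_scope.
Definition cubic (A B C D : int) : {poly int} :=
  A%:P * 'X^3 + B%:P * 'X^2 + C%:P * 'X + D%:P.
End CubicDef.

Section IrrDef.
Local Open Scope ring_scope.
Definition Zirreducible (f : {poly int}) : Prop :=
  f != 0 /\ ~~ (f \is a GRing.unit) /\
  (forall g h : {poly int}, f = g * h ->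
     g \is a GRing.unit \/ h \is a GRing.unit).
End IrrDef.

Definition alg_int (x : R) : Prop :=
  exists p : {poly int}, p \is monic /\ peval p x = 0%R.

Definition inK (theta x : R) : Prop :=
  exists a b c : Q, x = (Q2R a + Q2R b * theta + Q2R c * theta ^ 2)%R.

(* floor on R, via Stdlib's up: up x is the integer with x < up x <= x + 1 *)
Definition Rfloor (x : R) : Z := (up x - 1)%Z.

Definition nearfrac (x : R) : R := (x - IZR (Rfloor (x + / 2)))%R.

From HB Require Import structures.
From mathcomp Require Import all_boot all_order all_algebra.
From Stdlib Require Import Reals QArith Qreals Lra Lia.
From mathcomp Require Import Rstruct ssrZ.

Set Implicit Arguments.
Unset Strict Implicit.
Unset Printing Implicit Defensive.
Import GRing.Theory.

(* Let th' be a complex root of x^3 - p x - q.  For t = a + b theta + c theta^2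
   in K, the conjugate a + b th' + c th'^2 equals eps + delta th' with
   delta = b - c theta and eps = a + p c - c theta^2, so the norm of t is
   t * |eps + delta th'|^2.  The norm of the unit lambda is a positive rational
   whose powers, and those of its inverse, have denominators dividing d^3, so it
   equals 1; hence |eps_n + delta_n th'|^2 = lambda^-n tends to 0, and so do
   delta_n and eps_n.  Since d a_n, d b_n, d c_n are integers, k_n theta and
   k_n theta^2 are integers up to the small errors -d delta_n and -d eps_n, and
   expanding l_n alpha = 3 A k_n (theta - B) and l_n alpha^2 = k_n (theta - B)^2
   gives the same for them, which yields the identities for <.>. *)

Lemma intR_IZR (z : int) : intR z = IZR (Z_of_int z).
Proof.
case: z => n /=; first exact: INR_IZR_INZ.
by rewrite opp_IZR -INR_IZR_INZ addn1.
Qed.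

Lemma IZR_intR (z : Z) : IZR z = intR (int_of_Z z).
Proof. by rewrite intR_IZR int_of_ZK. Qed.

Section IntegerPolynomials.
Local Open Scope ring_scope.

Lemma intRE (z : int) : intR z = z%:~R.
Proof.
case: z => n; rewrite /intR INRE; first by [].
by rewrite NegzE mulrNz RoppE.
Qed.

Lemma intR_neq0 (z : int) : intR z <> 0%R -> z != 0.
Proof. by move=> z_neq0; apply/eqP => z0; apply: z_neq0; rewrite z0. Qed.

Lemma peval_horner (p : {poly int}) (x : R) :
  peval p x = (map_poly (intr : int -> R) p).[x].
Proof.
rewrite /peval map_polyE horner_Poly.
elim: (polyseq p) => [|c s IH] //=.
by rewrite IH intRE RplusE RmultE addrC mulrC.
Qed.

Lemma alg_intE (x : R) : alg_int x <-> integralOver (intr : int -> R) x.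
Proof.
split => [[p [p_monic p_root]] | [p p_monic p_root]].
  by exists p => //; rewrite /root -peval_horner p_root.
by exists p; split => //; rewrite peval_horner; apply/eqP.
Qed.

Lemma alg_int_pow (x : R) (n : nat) : alg_int x -> alg_int (pow x n).
Proof.
move=> /alg_intE x_int; apply/alg_intE; elim: n => [|n IH] /=.
  exact: integral1.
by rewrite RmultE; apply: integral_mul.
Qed.

Lemma cubic_seq (A B C D : int) :
  A != 0 -> polyseq (cubic A B C D) = [:: D; C; B; A].
Proof.
move=> A_neq0; rewrite -[RHS](@PolyK _ 0) //; congr polyseq.
apply/polyP => i; rewrite coef_Poly /cubic !coefD !coefCM coefC !coefXn coefX.
by case: i => [|[|[|[|i]]]] /=; rewrite ?mulr0 ?mulr1 ?addr0 ?add0r ?nth_nil.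
Qed.

Lemma cubic_no_rat_root (A B C D : int) (r : rat) :
  A != 0 -> Zirreducible (cubic A B C D) ->
  ~~ root (map_poly (intr : int -> rat) (cubic A B C D)) r.
Proof.
move=> A_neq0 [_ [_ irr]]; rewrite root_factor_theorem.
apply/negP => /dvdpP_rat_int [f [s s_neq0 Xr_f] [g fg]].
have size_f : size f = 2%N.
  have := size_XsubC r; rewrite Xr_f size_scale // size_map_inj_poly //.
  exact: intr_inj.
have size_fg : size (f * g) = 4%N by rewrite -fg cubic_seq.
have g_neq0 : g != 0 by apply: contra_eqN size_fg => /eqP ->; rewrite mulr0 size_poly0.
have f_neq0 : f != 0 by rewrite -size_poly_eq0 size_f.
move: size_fg; rewrite size_mul // size_f.
case: (irr _ _ fg); rewrite poly_unitE => /andP [/eqP size1 _].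
  by rewrite size1 in size_f.
by rewrite size1.
Qed.

Lemma peval_rat_neq0 (A B C D : int) (r : Q) :
  A != 0 -> Zirreducible (cubic A B C D) -> peval (cubic A B C D) (Q2R r) != 0.
Proof.
move=> A_neq0 irr.
pose x : rat := (int_of_Z (Qnum r))%:~R / (int_of_Z (Zpos (Qden r)))%:~R.
have -> : Q2R r = ratr x.
  by rewrite /Q2R /x fmorph_div !rmorph_int -!intRE -!IZR_intR.
rewrite peval_horner.
have -> : map_poly (intr : int -> R) (cubic A B C D) =
          map_poly ratr (map_poly (intr : int -> rat) (cubic A B C D)).
  by rewrite -map_poly_comp; apply: eq_map_poly => z /=; rewrite ratr_int.
by rewrite horner_map fmorph_eq0 cubic_no_rat_root.
Qed.
End IntegerPolynomials.

Open Scope R_scope.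

Definition isQ (x : R) : Prop := exists r : Q, x = Q2R r.
Definition isZ (x : R) : Prop := exists z : Z, x = IZR z.

Lemma isQ_Q (r : Q) : isQ (Q2R r). Proof. by exists r. Qed.

Lemma isQ_add x y : isQ x -> isQ y -> isQ (x + y).
Proof. by move=> [r ->] [s ->]; exists (r + s)%Q; rewrite Q2R_plus. Qed.

Lemma isQ_mul x y : isQ x -> isQ y -> isQ (x * y).
Proof. by move=> [r ->] [s ->]; exists (r * s)%Q; rewrite Q2R_mult. Qed.

Lemma isQ_opp x : isQ x -> isQ (- x).
Proof. by move=> [r ->]; exists (- r)%Q; rewrite Q2R_opp. Qed.

Lemma isQ_sub x y : isQ x -> isQ y -> isQ (x - y).
Proof. by move=> qx qy; apply: isQ_add => //; apply: isQ_opp. Qed.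

Lemma isQ_inv x : isQ x -> isQ (/ x).
Proof.
move=> [r ->]; case: (Qeq_dec r 0) => [r0 | r_neq0].
  have Q2R0 : Q2R 0 = 0 by rewrite /Q2R /=; ring.
  by exists 0%Q; rewrite (Qeq_eqR _ _ r0) Q2R0 Rinv_0.
by exists (/ r)%Q; rewrite Q2R_inv.
Qed.

Lemma isZ_add x y : isZ x -> isZ y -> isZ (x + y).
Proof. by move=> [a ->] [b ->]; exists (a + b)%Z; rewrite plus_IZR. Qed.

Lemma isZ_mul x y : isZ x -> isZ y -> isZ (x * y).
Proof. by move=> [a ->] [b ->]; exists (a * b)%Z; rewrite mult_IZR. Qed.

Lemma isZ_opp x : isZ x -> isZ (- x).
Proof. by move=> [a ->]; exists (- a)%Z; rewrite opp_IZR. Qed.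

Lemma isZ_sub x y : isZ x -> isZ y -> isZ (x - y).
Proof. by move=> zx zy; apply: isZ_add => //; apply: isZ_opp. Qed.

Lemma isZ_IZR z : isZ (IZR z). Proof. by exists z. Qed.

Lemma isZ_intR z : isZ (intR z). Proof. rewrite intR_IZR; exact: isZ_IZR. Qed.

Lemma isZ_INR n : isZ (INR n). Proof. rewrite INR_IZR_INZ; exact: isZ_IZR. Qed.

Lemma isZ_pow x n : isZ x -> isZ (x ^ n).
Proof. by move=> zx; elim: n => [|n IH] /=; [exact: (isZ_IZR 1) | apply: isZ_mul]. Qed.

Lemma isZ_isQ x : isZ x -> isQ x.
Proof. by move=> [z ->]; exists (inject_Z z); rewrite /Q2R /= Rinv_1 Rmult_1_r. Qed.

Lemma isZ_abs_ge1 x : isZ x -> x <> 0 -> 1 <= Rabs x.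
Proof.
move=> [z ->] z_neq0; rewrite -abs_IZR; apply: IZR_le.
have : z <> 0%Z by move=> z0; apply: z_neq0; rewrite z0.
lia.
Qed.

Ltac solve_isZ := repeat first
  [ assumption | apply: isZ_intR | apply: isZ_IZR | apply: isZ_INR | apply: isZ_pow
  | apply: isZ_opp | apply: isZ_sub | apply: isZ_add | apply: isZ_mul ].

Ltac solve_isQ := repeat first
  [ assumption | apply: isQ_Q | solve [apply: isZ_isQ; solve_isZ]
  | apply: isQ_opp | apply: isQ_sub | apply: isQ_add | apply: isQ_mul
  | apply: isQ_inv ].

Definition cubic_p (A B C : int) : R := 3 * (intR B ^ 2 - 3 * intR A * intR C).
Definition cubic_q (A B C D : int) : R :=
  -2 * intR B ^ 3 + 9 * intR A * intR B * intR C - 27 * intR A ^ 2 * intR D.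

Lemma peval_cubic (A B C D : int) x : intR A <> 0 ->
  peval (cubic A B C D) x = intR A * x ^ 3 + intR B * x ^ 2 + intR C * x + intR D.
Proof. by move=> /intR_neq0 A_neq0; rewrite /peval cubic_seq //=; ring. Qed.

Lemma depressed_cubicE (A B C D : int) t : intR A <> 0 ->
  t ^ 3 - cubic_p A B C * t - cubic_q A B C D =
  27 * intR A ^ 2 * peval (cubic A B C D) ((t - intR B) / (3 * intR A)).
Proof. by move=> A_neq0; rewrite peval_cubic // /cubic_p /cubic_q; field. Qed.

Lemma depressed_root_iff (A B C D : int) alpha : 0 < intR A ->
  (forall x, peval (cubic A B C D) x = 0 <-> x = alpha) ->
  forall t, t ^ 3 = cubic_p A B C * t + cubic_q A B C D <->
            t = 3 * intR A * alpha + intR B.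
Proof.
move=> A_gt0 roots t; have A_neq0 : intR A <> 0 by lra.
have cubicE := @depressed_cubicE A B C D t A_neq0.
split => [t_root | t_def].
- have /roots <- : peval (cubic A B C D) ((t - intR B) / (3 * intR A)) = 0.
    apply: (Rmult_eq_reg_l (27 * intR A ^ 2)); [rewrite -cubicE; lra | nra].
  by field.
- have talpha : (t - intR B) / (3 * intR A) = alpha by rewrite t_def; field.
  by move: cubicE; rewrite talpha (proj2 (roots alpha) erefl); lra.
Qed.

Lemma theta_irrational (A B C D : int) alpha : 0 < intR A ->
  Zirreducible (cubic A B C D) -> peval (cubic A B C D) alpha = 0 ->
  ~ isQ (3 * intR A * alpha + intR B).
Proof.
move=> A_gt0 irr root th_rat.
have [r alphaE] : isQ alpha.
  have -> : alpha = (3 * intR A * alpha + intR B - intR B) / (3 * intR A) by field; lra.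
  solve_isQ.
have A_neq0 := @intR_neq0 A ltac:(lra).
by move/eqP: (@peval_rat_neq0 A B C D r A_neq0 irr); rewrite -alphaE.
Qed.

(* A triple (a, b, c) stands for a + b th + c th^2 with th^3 = p th + q; tmul is
   the multiplication of such numbers, tnorm the determinant of multiplication by
   one of them, and tadj the adjugate of that matrix. *)
Definition triple := (R * R * R)%type.

Definition rat_triple (t : triple) : Prop :=
  let '(a, b, c) := t in isQ a /\ isQ b /\ isQ c.

Definition tvalue (th : R) (t : triple) : R :=
  let '(a, b, c) := t in a + b * th + c * th ^ 2.

Definition tmul (p q : R) (s t : triple) : triple :=
  let '(a, b, c) := s in let '(a', b', c') := t in
  (a * a' + q * (b * c' + c * b'),
   a * b' + b * a' + p * (b * c' + c * b') + q * c * c',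
   a * c' + b * b' + c * a' + p * c * c').

Fixpoint tpow (p q : R) (t : triple) (n : nat) : triple :=
  if n is n'.+1 then tmul p q (tpow p q t n') t else (1, 0, 0).

Definition tnorm (p q : R) (t : triple) : R :=
  let '(a, b, c) := t in
  a * ((a + c * p) * (a + c * p) - (b * p + c * q) * b)
  - c * q * (b * (a + c * p) - (b * p + c * q) * c)
  + b * q * (b * b - (a + c * p) * c).

Definition tadj (p q : R) (t : triple) : triple :=
  let '(a, b, c) := t in
  ((a + c * p) * (a + c * p) - (b * p + c * q) * b,
   - (b * (a + c * p) - (b * p + c * q) * c),
   b * b - (a + c * p) * c).

Definition tscale (k : R) (t : triple) : triple :=
  let '(a, b, c) := t in (k * a, k * b, k * c).

Definition tinv (p q : R) (t : triple) : triple :=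
  tscale (/ tnorm p q t) (tadj p q t).

Definition tdelta (th : R) (t : triple) : R :=
  let '(a, b, c) := t in b - c * th.

Definition tepsilon (th p : R) (t : triple) : R :=
  let '(a, b, c) := t in a + p * c - c * th ^ 2.

(* If th' is a complex root of x^3 - p x - q, then a + b th' + c th'^2 equals
   tepsilon + tdelta * th', and tconj_norm is its squared modulus. *)
Definition tconj_norm (th p : R) (t : triple) : R :=
  let e := tepsilon th p t in let d := tdelta th t in
  e ^ 2 - th * e * d + (th ^ 2 - p) * d ^ 2.

Section TripleAlgebra.
Variables (th p q : R).
Hypothesis th_root : th ^ 3 = p * th + q.

Let qE : q = th ^ 3 - p * th. Proof. lra. Qed.

Lemma tvalue_mul s t : tvalue th (tmul p q s t) = tvalue th s * tvalue th t.
Proof. by case: s => [[a b] c]; case: t => [[a' b'] c'] /=; rewrite qE; ring. Qed.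

Lemma tvalue_pow t n : tvalue th (tpow p q t n) = tvalue th t ^ n.
Proof. by elim: n => [|n IH] /=; [ring | rewrite tvalue_mul IH; ring]. Qed.

Lemma tvalue_adj t : tvalue th (tadj p q t) * tvalue th t = tnorm p q t.
Proof. by case: t => [[a b] c] /=; rewrite qE; ring. Qed.

Lemma tnorm_factor t : tnorm p q t = tvalue th t * tconj_norm th p t.
Proof. by case: t => [[a b] c]; rewrite /tconj_norm /=; rewrite qE; ring. Qed.

Lemma tvalue_scale k t : tvalue th (tscale k t) = k * tvalue th t.
Proof. by case: t => [[a b] c] /=; ring. Qed.

Lemma tvalue_inv t : tnorm p q t <> 0 -> tvalue th (tinv p q t) = / tvalue th t.
Proof.
rewrite /tinv tvalue_scale -(tvalue_adj t) => N_neq0.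
have [adj_neq0 val_neq0] := Rmult_neq_0_reg _ _ N_neq0.
by field.
Qed.

End TripleAlgebra.

Lemma tnorm_mul p q s t : tnorm p q (tmul p q s t) = tnorm p q s * tnorm p q t.
Proof. by case: s => [[a b] c]; case: t => [[a' b'] c'] /=; ring. Qed.

Lemma tnorm_pow p q t n : tnorm p q (tpow p q t n) = tnorm p q t ^ n.
Proof. by elim: n => [|n IH] /=; [ring | rewrite tnorm_mul IH; ring]. Qed.

Lemma tnorm_scale p q k t : tnorm p q (tscale k t) = k ^ 3 * tnorm p q t.
Proof. by case: t => [[a b] c] /=; ring. Qed.

Lemma tnorm_adj p q t : tnorm p q (tadj p q t) = tnorm p q t ^ 2.
Proof. by case: t => [[a b] c] /=; ring. Qed.

Lemma tnorm_inv p q t : tnorm p q t <> 0 -> tnorm p q (tinv p q t) = / tnorm p q t.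
Proof. by move=> N_neq0; rewrite /tinv tnorm_scale tnorm_adj; field. Qed.

Lemma tconj_normE th p t : tconj_norm th p t =
  (tepsilon th p t - th * tdelta th t / 2) ^ 2 + (3 * th ^ 2 / 4 - p) * tdelta th t ^ 2.
Proof. by rewrite /tconj_norm; field. Qed.

Section RationalTriples.
Variables (p q : R).
Hypotheses (p_rat : isQ p) (q_rat : isQ q).

Lemma rat_triple_mul s t : rat_triple s -> rat_triple t -> rat_triple (tmul p q s t).
Proof.
case: s => [[a b] c]; case: t => [[a' b'] c'] /= [? [? ?]] [? [? ?]].
by split; [|split]; solve_isQ.
Qed.

Lemma rat_triple_pow t n : rat_triple t -> rat_triple (tpow p q t n).
Proof.
move=> t_rat; elim: n => [|n IH] /=; last exact: rat_triple_mul.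
by split; [|split]; [exact: (isZ_isQ (isZ_IZR 1)) | exact: (isZ_isQ (isZ_IZR 0))..].
Qed.

Lemma isQ_tnorm t : rat_triple t -> isQ (tnorm p q t).
Proof. by case: t => [[a b] c] /= [? [? ?]]; solve_isQ. Qed.

Lemma rat_triple_inv t : rat_triple t -> rat_triple (tinv p q t).
Proof.
move=> t_rat; have N_rat := isQ_tnorm t_rat.
move: t_rat; case: t N_rat => [[a b] c] /= N_rat [? [? ?]].
by split; [|split]; solve_isQ.
Qed.

End RationalTriples.

Lemma isZ_tnorm p q a b c : isZ p -> isZ q -> isZ a -> isZ b -> isZ c ->
  isZ (tnorm p q (a, b, c)).
Proof. by move=> *; rewrite /=; solve_isZ. Qed.

Lemma pow_bounded_le1 y K : 0 <= y -> (forall n, y ^ n <= K) -> y <= 1.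
Proof.
move=> y_ge0 pow_bnd; apply: Rnot_lt_le => y_gt1.
have [N powN] := @Pow_x_infinity y ltac:(rewrite Rabs_right; lra) (K + 1).
have := powN N (le_n N); rewrite Rabs_right; last by apply/Rle_ge/pow_le.
by have := pow_bnd N; lra.
Qed.

Lemma nearfrac_IZR_add z y : Rabs y < / 2 -> nearfrac (IZR z + y) = y.
Proof.
move=> /Rabs_def2 y_small; rewrite /nearfrac /Rfloor.
rewrite -(tech_up (IZR z + y + / 2) (z + 1)); rewrite ?plus_IZR; try lra.
by rewrite opp_IZR; ring.
Qed.

Lemma abs_lt_of_sqr x y : 0 <= y -> x ^ 2 < y ^ 2 -> Rabs x < y.
Proof.
move=> y_ge0 sqr_lt.
by case: (Rcase_abs x) => x_sgn; [rewrite Rabs_left | rewrite Rabs_right]; nra.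
Qed.

Lemma quad_form_small th p d e eta :
  0 < 3 * th ^ 2 / 4 - p -> 0 < eta ->
  (e - th * d / 2) ^ 2 + (3 * th ^ 2 / 4 - p) * d ^ 2 <
    Rmin ((3 * th ^ 2 / 4 - p) * eta ^ 2 / (4 * (1 + th ^ 2))) (eta ^ 2 / 4) ->
  Rabs d < eta /\ Rabs e < eta.
Proof.
set m := 3 * th ^ 2 / 4 - p; set K := 4 * (1 + th ^ 2) => m_gt0 eta_gt0 form_lt.
have [lt_m lt_eta] : (e - th * d / 2) ^ 2 + m * d ^ 2 < m * eta ^ 2 / K /\
                     (e - th * d / 2) ^ 2 + m * d ^ 2 < eta ^ 2 / 4.
  by split; apply: (Rlt_le_trans _ _ _ form_lt); [apply: Rmin_l | apply: Rmin_r].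
have K_gt0 : 0 < K by rewrite /K; nra.
have e_sqr_ge0 := pow2_ge_0 (e - th * d / 2).
have md_ge0 : 0 <= m * d ^ 2 by apply: Rmult_le_pos; [lra | apply: pow2_ge_0].
have dK_lt : d ^ 2 * K < eta ^ 2.
  apply: (Rmult_lt_reg_l m) => //.
  have -> : m * eta ^ 2 = m * eta ^ 2 / K * K by field; lra.
  by rewrite -Rmult_assoc; apply: Rmult_lt_compat_r; lra.
have d_small : Rabs d < eta / 2 by apply: abs_lt_of_sqr; rewrite /K in dK_lt; nra.
have thd_small : Rabs (th * d) < eta / 2 by apply: abs_lt_of_sqr; rewrite /K in dK_lt; nra.
have ed_small : Rabs (e - th * d / 2) < eta / 2 by apply: abs_lt_of_sqr; nra.
split; first lra.
have -> : e = (e - th * d / 2) + th * d * / 2 by field.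
apply: (Rle_lt_trans _ _ _ (Rabs_triang _ _)).
by rewrite Rabs_mult (Rabs_right (/ 2)); lra.
Qed.

Section CubicField.
Variables (th p q : R).
Hypotheses (p_int : isZ p) (q_int : isZ q).
Hypothesis th_root : th ^ 3 = p * th + q.
Hypothesis th_unique : forall t, t ^ 3 = p * t + q -> t = th.
Hypothesis th_irr : ~ isQ th.

Let p_rat : isQ p. Proof. exact: isZ_isQ. Qed.
Let q_rat : isQ q. Proof. exact: isZ_isQ. Qed.

Lemma rat_coords_eq0 a b c : isQ a -> isQ b -> isQ c ->
  a + b * th + c * th ^ 2 = 0 -> a = 0 /\ b = 0 /\ c = 0.
Proof.
move=> a_rat b_rat c_rat coords0.
have c0 : c = 0.
  case: (Req_dec c 0) => [// | c_neq0]; exfalso.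
  set be := b / c; set ga := a / c.
  have quad : th ^ 2 + be * th + ga = 0.
    apply: (Rmult_eq_reg_l c) => //; rewrite Rmult_0_r -coords0 /be /ga; field.
    exact: c_neq0.
  set s := be ^ 2 - ga - p; set r := be * ga - q.
  have cubic_split x :
    x ^ 3 - p * x - q = (x ^ 2 + be * x + ga) * (x - be) + (s * x + r).
    by rewrite /s /r; ring.
  have rem0 : s * th + r = 0.
    by have := cubic_split th; rewrite quad th_root; lra.
  case: (Req_dec s 0) => [s0 | s_neq0].
  (* the quadratic then divides the cubic, whose second real root is - be - th *)
  - have other_root : (- be - th) ^ 3 = p * (- be - th) + q.
      have := cubic_split (- be - th).
      have -> : (- be - th) ^ 2 + be * (- be - th) + ga = 0 by rewrite -quad; ring.
      by rewrite s0 in rem0 *; lra.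
    have th_eq : th = - be / 2 by have := th_unique other_root; lra.
    by apply: th_irr; rewrite th_eq /be; solve_isQ.
  - have th_eq : th = - r / s by field_simplify_eq; lra.
    by apply: th_irr; rewrite th_eq /r /s /be /ga; solve_isQ.
rewrite c0 Rmult_0_l Rplus_0_r in coords0.
have b0 : b = 0.
  case: (Req_dec b 0) => [// | b_neq0]; exfalso.
  have th_eq : th = - a / b by field_simplify_eq; lra.
  by apply: th_irr; rewrite th_eq; solve_isQ.
by rewrite b0 Rmult_0_l in coords0; lra.
Qed.

Lemma disc_gt0 : 0 < 3 * th ^ 2 / 4 - p.
Proof.
apply: Rnot_le_lt => disc_le0.
set s := sqrt (p - 3 * th ^ 2 / 4).
have s_sqr : s * s = p - 3 * th ^ 2 / 4 by apply: sqrt_sqrt; lra.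
have qE : q = th ^ 3 - p * th by lra.
have root1 : - th / 2 + s = th by apply: th_unique; rewrite qE; nra.
have root2 : - th / 2 - s = th by apply: th_unique; rewrite qE; nra.
have th0 : th = 0 by lra.
by apply: th_irr; rewrite th0; exact: (isZ_isQ (isZ_IZR 0)).
Qed.

Lemma rat_triple_inj s t :
  rat_triple s -> rat_triple t -> tvalue th s = tvalue th t -> s = t.
Proof.
case: s => [[a b] c]; case: t => [[a' b'] c'] /= [? [? ?]] [? [? ?]] val_eq.
have [a_eq [b_eq c_eq]] : a - a' = 0 /\ b - b' = 0 /\ c - c' = 0.
  by apply: rat_coords_eq0; [solve_isQ.. | lra].
by congr (_, _, _); lra.
Qed.

Lemma tnorm_gt0 t : rat_triple t -> 0 < tvalue th t -> 0 < tnorm p q t.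
Proof.
move=> t_rat val_gt0; rewrite (tnorm_factor th_root).
apply: Rmult_lt_0_compat => //; rewrite tconj_normE.
have disc := disc_gt0; apply: Rnot_le_lt => conj_le0.
have e_sqr := pow2_ge_0 (tepsilon th p t - th * tdelta th t / 2).
have d_sqr := pow2_ge_0 (tdelta th t).
have delta0 : tdelta th t = 0 by apply: Rsqr_eq_0; rewrite Rsqr_pow2; nra.
have eps0 : tepsilon th p t = 0.
  by rewrite delta0 in conj_le0; apply: Rsqr_eq_0; rewrite Rsqr_pow2; nra.
move: t_rat val_gt0 delta0 eps0 => {conj_le0 e_sqr d_sqr}.
case: t => [[a b] c] /= [a_rat [b_rat c_rat]] val_gt0 delta0 eps0.
have [b0 [c0 _]] : b = 0 /\ - c = 0 /\ 0 = 0.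
  by apply: (@rat_coords_eq0 b (- c) 0); [solve_isQ.. | lra].
have c0' : c = 0 by lra.
by rewrite b0 c0' in val_gt0 eps0; lra.
Qed.

Variable d : nat.
Hypothesis d_gt0 : 0 < INR d.
Hypothesis integral_basis : forall x, inK th x -> alg_int x ->
  exists u v w : Z, x = (IZR u + IZR v * th + IZR w * th ^ 2) / INR d.

Lemma integral_triple t : rat_triple t -> alg_int (tvalue th t) ->
  exists u v w : Z, t = tscale (/ INR d) (IZR u, IZR v, IZR w).
Proof.
move=> t_rat t_int.
have t_inK : inK th (tvalue th t).
  by case: t t_rat {t_int} => [[a b] c] [[ra ->] [[rb ->] [rc ->]]]; exists ra, rb, rc.
have [u [v [w tE]]] := integral_basis t_inK t_int.
exists u, v, w; apply: rat_triple_inj => //.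
  by split; [|split]; solve_isQ.
by rewrite tvalue_scale tE /=; field; lra.
Qed.

Lemma isZ_cube_tnorm t : rat_triple t -> alg_int (tvalue th t) ->
  isZ (INR d ^ 3 * tnorm p q t).
Proof.
move=> t_rat t_int; have [u [v [w ->]]] := integral_triple t_rat t_int.
rewrite tnorm_scale -Rmult_assoc -Rpow_mult_distr Rinv_r; last lra.
by rewrite pow1 Rmult_1_l; apply: isZ_tnorm; solve_isZ.
Qed.

(* The norms N^n of the powers of t have denominators dividing d^3, so 1/N
   cannot exceed 1. *)
Lemma tnorm_ge1 t : rat_triple t -> alg_int (tvalue th t) -> 0 < tvalue th t ->
  1 <= tnorm p q t.
Proof.
move=> t_rat t_int val_gt0; have N_gt0 := tnorm_gt0 t_rat val_gt0.
suff : / tnorm p q t <= 1 by have := Rinv_r _ (Rgt_not_eq _ _ N_gt0); nra.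
apply: (@pow_bounded_le1 _ (INR d ^ 3)); first exact/Rlt_le/Rinv_0_lt_compat.
move=> n; have powN_gt0 := pow_lt _ n N_gt0.
have powN_int : isZ (INR d ^ 3 * tnorm p q t ^ n).
  rewrite -tnorm_pow; apply: isZ_cube_tnorm; first exact: rat_triple_pow.
  by rewrite tvalue_pow //; apply: alg_int_pow.
have cube_gt0 : 0 < INR d ^ 3 by apply: pow_lt.
have := isZ_abs_ge1 powN_int ltac:(nra); rewrite Rabs_right; last nra.
move=> ge1; rewrite pow_inv; apply: (Rmult_le_reg_r (tnorm p q t ^ n)) => //.
by rewrite Rinv_l; lra.
Qed.

Lemma unit_tnorm t : rat_triple t -> alg_int (tvalue th t) ->
  alg_int (/ tvalue th t) -> 0 < tvalue th t -> tnorm p q t = 1.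
Proof.
move=> t_rat t_int inv_int val_gt0; have N_ge1 := tnorm_ge1 t_rat t_int val_gt0.
have N_neq0 : tnorm p q t <> 0 by lra.
have := @tnorm_ge1 (tinv p q t) (rat_triple_inv p_rat q_rat t_rat).
rewrite tvalue_inv // tnorm_inv // => /(_ inv_int (Rinv_0_lt_compat _ val_gt0)).
by have := Rinv_r _ N_neq0; nra.
Qed.

Variables (lambda : R) (a b c : nat -> Q).
Hypotheses (lambda_gt1 : 1 < lambda) (lambda_int : alg_int lambda).
Hypothesis lambda_inv_int : alg_int (/ lambda).
Hypothesis lambda_pow :
  forall n, Q2R (a n) + Q2R (b n) * th + Q2R (c n) * th ^ 2 = lambda ^ n.

Let coords n : triple := (Q2R (a n), Q2R (b n), Q2R (c n)).

Let coords_rat n : rat_triple (coords n).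
Proof. by split; [|split]; apply: isQ_Q. Qed.

Let coords_int n : alg_int (tvalue th (coords n)).
Proof. by rewrite /= lambda_pow; apply: alg_int_pow. Qed.

Lemma tconj_norm_coords n : tconj_norm th p (coords n) = / lambda ^ n.
Proof.
have val1 : tvalue th (coords 1) = lambda by rewrite /= lambda_pow pow_1.
have coordsE : coords n = tpow p q (coords 1) n.
  apply: rat_triple_inj; [exact: coords_rat | exact: rat_triple_pow | ].
  by rewrite tvalue_pow // val1 /= lambda_pow.
have unit1 : tnorm p q (coords 1) = 1.
  apply: unit_tnorm; rewrite ?val1; first exact: coords_rat.
  - exact: lambda_int.
  - exact: lambda_inv_int.
  - lra.
have powl_neq0 : lambda ^ n <> 0 by apply: pow_nonzero; lra.
have := tnorm_factor th_root (coords n).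
rewrite {1}coordsE tnorm_pow unit1 pow1 /= lambda_pow => norm1.
by apply: (Rmult_eq_reg_l (lambda ^ n)) => //; rewrite -norm1 Rinv_r.
Qed.

Lemma coords_small eta : 0 < eta -> exists N, forall n, (N < n)%nat ->
  Rabs (Q2R (b n) - Q2R (c n) * th) < eta /\
  Rabs (Q2R (a n) + p * Q2R (c n) - Q2R (c n) * th ^ 2) < eta.
Proof.
move=> eta_gt0; have disc := disc_gt0.
set bound := Rmin ((3 * th ^ 2 / 4 - p) * eta ^ 2 / (4 * (1 + th ^ 2))) (eta ^ 2 / 4).
have bound_gt0 : 0 < bound.
  have eta2_gt0 : 0 < eta ^ 2 by apply: pow_lt.
  have th2_ge0 := pow2_ge_0 th.
  by apply: Rmin_pos; apply: Rdiv_lt_0_compat; nra.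
have inv_lt1 : Rabs (/ lambda) < 1.
  rewrite Rabs_right; last by apply/Rle_ge/Rlt_le/Rinv_0_lt_compat; lra.
  by rewrite -Rinv_1; apply: Rinv_lt_contravar; lra.
have [N powN] := @pow_lt_1_zero (/ lambda) inv_lt1 bound bound_gt0.
exists N => n /ssrnat.ltP n_gt.
apply: (quad_form_small disc eta_gt0).
have := powN n ltac:(lia).
rewrite Rabs_right; last by apply/Rle_ge/pow_le/Rlt_le/Rinv_0_lt_compat; lra.
by rewrite pow_inv -(tconj_norm_coords n) tconj_normE.
Qed.

Lemma coords_denominator n : exists u v w : Z,
  INR d * Q2R (a n) = IZR u /\ INR d * Q2R (b n) = IZR v /\ INR d * Q2R (c n) = IZR w.
Proof.
have [u [v [w [aE bE cE]]]] := integral_triple (coords_rat n) (coords_int n).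
by exists u, v, w; rewrite aE bE cE; split; [|split]; field; lra.
Qed.

Lemma scaled_coords_near_integers eta : 0 < eta -> exists N, forall n, (N < n)%nat ->
  isZ (INR d * Q2R (c n)) /\
  exists (v s : Z) (y e : R),
    INR d * Q2R (c n) * th = IZR v + y /\
    INR d * Q2R (c n) * th ^ 2 = IZR s + e /\ Rabs y + Rabs e < eta.
Proof.
move=> eta_gt0; have eps_gt0 : 0 < eta / (2 * INR d).
  by apply: Rdiv_lt_0_compat; lra.
have [N smallN] := coords_small eps_gt0.
exists N => n /smallN [delta_small eps_small].
have [u [v [w [uE [vE wE]]]]] := coords_denominator n.
have [pz pzE] := p_int.
split; first by rewrite wE; exact: isZ_IZR.
exists v, (u + pz * w)%Z, (- (INR d * (Q2R (b n) - Q2R (c n) * th))),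
  (- (INR d * (Q2R (a n) + p * Q2R (c n) - Q2R (c n) * th ^ 2))).
split; [|split].
- by rewrite -vE; ring.
- by rewrite plus_IZR mult_IZR -uE -wE -pzE; ring.
- rewrite !Rabs_Ropp !Rabs_mult (Rabs_right (INR d)); last lra.
  have -> : eta = INR d * (eta / (2 * INR d)) + INR d * (eta / (2 * INR d)) by field; lra.
  by apply: Rplus_lt_compat; apply: Rmult_lt_compat_l.
Qed.

End CubicField.

Lemma nearfrac_shift_alpha (A B alpha th k y e : R) (v s : Z) :
  isZ A -> isZ B -> isZ k -> 0 < A -> th = 3 * A * alpha + B ->
  k * th = IZR v + y -> k * th ^ 2 = IZR s + e ->
  (3 * A + 2 * Rabs B + 1) * (Rabs y + Rabs e) < / 2 ->
  nearfrac (9 * A ^ 2 * k * alpha) = 3 * A * nearfrac (k * th) /\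
  nearfrac (9 * A ^ 2 * k * alpha ^ 2) = nearfrac (k * th ^ 2) - 2 * B * nearfrac (k * th).
Proof.
set D := 3 * A + 2 * Rabs B + 1 => A_int B_int k_int A_gt0 thE kthE kth2E err_small.
have := Rabs_pos y; have := Rabs_pos e; have := Rabs_pos B => B_ge0 e_ge0 y_ge0.
have err_le : Rabs y + Rabs e <= D * (Rabs y + Rabs e) by rewrite /D; nra.
have y_small : Rabs y < / 2 by lra.
have e_small : Rabs e < / 2 by lra.
have Ay_small : Rabs (3 * A * y) < / 2.
  by rewrite Rabs_mult (Rabs_right (3 * A)); rewrite /D in err_small; nra.
have eBy_small : Rabs (e - 2 * B * y) < / 2.
  apply: (Rle_lt_trans _ _ _ (Rabs_triang _ _)).
  by rewrite Rabs_Ropp !Rabs_mult (Rabs_right 2); rewrite /D in err_small; nra.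
have [z1 z1E] : isZ (3 * A * IZR v - 3 * A * B * k) by solve_isZ.
have [z2 z2E] : isZ (IZR s - 2 * B * IZR v + B ^ 2 * k) by solve_isZ.
have vE : IZR v = k * th - y by lra.
have sE : IZR s = k * th ^ 2 - e by lra.
have -> : 9 * A ^ 2 * k * alpha = IZR z1 + 3 * A * y by rewrite -z1E vE thE; ring.
have -> : 9 * A ^ 2 * k * alpha ^ 2 = IZR z2 + (e - 2 * B * y).
  by rewrite -z2E vE sE thE; ring.
by rewrite kthE kth2E !nearfrac_IZR_add.
Qed.

Theorem mainTheorem19
  (A B C D : int) (alpha : R) (d : nat) (lambda : R) (a b c : nat -> Q) :
  (0 < intR A)%R ->
  Zirreducible (cubic A B C D) ->
  (forall x : R, peval (cubic A B C D) x = 0%R <-> x = alpha) ->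
  let theta := (3 * intR A * alpha + intR B)%R in
  (0 < d)%nat ->
  (forall x : R, inK theta x -> alg_int x ->
     exists u v w : Z,
       x = ((IZR u + IZR v * theta + IZR w * theta ^ 2) / INR d)%R) ->
  inK theta lambda -> alg_int lambda -> alg_int (/ lambda)%R ->
  (1 < lambda)%R ->
  (forall n : nat,
     (Q2R (a n) + Q2R (b n) * theta + Q2R (c n) * theta ^ 2)%R = (lambda ^ n)%R) ->
  let k := fun n : nat => (INR d * Q2R (c n))%R in
  let l := fun n : nat => (9 * intR A ^ 2 * k n)%R in
  exists n0 : nat, forall n : nat, (n0 < n)%nat ->
    nearfrac (l n * alpha) = (3 * intR A * nearfrac (k n * theta))%R /\
    nearfrac (l n * alpha ^ 2) =
      (nearfrac (k n * theta ^ 2) - 2 * intR B * nearfrac (k n * theta))%R.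
Proof.
move=> A_gt0 irr roots theta /ssrnat.ltP/lt_0_INR d_gt0 basis _ lambda_int
  lambda_inv_int lambda_gt1 lambda_pow k l.
have th_iff := depressed_root_iff A_gt0 roots.
have th_root := proj2 (th_iff theta) erefl.
have th_unique t := proj1 (th_iff t).
have th_irr := theta_irrational A_gt0 irr (proj2 (roots alpha) erefl).
have [p_int q_int] : isZ (cubic_p A B C) /\ isZ (cubic_q A B C D).
  by rewrite /cubic_p /cubic_q; split; solve_isZ.
set M := 3 * intR A + 2 * Rabs (intR B) + 1.
have M_gt0 : 0 < M by have := Rabs_pos (intR B); rewrite /M; lra.
have [N nearN] := scaled_coords_near_integers p_int q_int th_root th_unique th_irr
  d_gt0 basis lambda_gt1 lambda_int lambda_inv_int lambda_pow
  (Rinv_0_lt_compat _ (Rmult_lt_0_compat 2 M ltac:(lra) M_gt0)).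
exists N => n /nearN [k_int [v [s [y [e [kthE [kth2E err_small]]]]]]].
apply: (nearfrac_shift_alpha (isZ_intR A) (isZ_intR B) k_int A_gt0 erefl kthE kth2E).
have -> : / 2 = M * / (2 * M) by field; lra.
exact: Rmult_lt_compat_l.
Qed.
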